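(* In the worst case, $\Omega(n)$ users move after $\Omega(n)$ rounds of the myopic best-response dynamics described below: there are constants $c_1,c_2>0$ such that for every sufficiently large $n$ there is an instance with $n$ users (nonnegative embedding weights, features, linear threshold classifier, scaled 2-norm cost) in which at least $c_1 n$ users move at a round $t\ge c_2 n$.
   Context: Users $i$ have features $x_i\in\mathbb{R}^\ell$; embeddings $\phi(x_i;x_{-i})=\widetilde{w}_{ii}x_i+\sum_{j\neq i}\widetilde{w}_{ji}x_j$ with $\widetilde{w}_{ji}\ge0$. Classifier: $h_{\theta,b}(x_i;x_{-i})=\mathrm{sign}(\theta^\top\phi(x_i;x_{-i})+b)$, $\mathrm{sign}(0)=+1$. Cost $c_\beta(x,x')=\beta\|x-x'\|_2$, $\beta>0$. Dynamics: $x_i^{(0)}=x_i$; at each round $t\ge1$ all users update concurrently; user $i$ changes her features only if she is currently classified $-1$ and some $x'$ with $h(x';x^{(t-1)}_{-i})=+1$ has $c_\beta(x^{(t-1)}_i,x')\le2$, in which case she moves to the minimum-cost such point; otherwise she stays. User $i$ ''moves at round $t$'' if $x_i^{(t)}\neq x_i^{(t-1)}$. *)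

From mathcomp Require Import all_boot all_order all_algebra.
From mathcomp Require Import reals.
Set Implicit Arguments. Unset Strict Implicit. Unset Printing Implicit Defensive.
Import Order.TTheory GRing.Theory Num.Theory.
Local Open Scope ring_scope.

Section Strategic.
Variables (R : realType) (l n : nat).

Definition norm2 (v : 'rV[R]_l) : R := Num.sqrt (\sum_(k < l) v ord0 k ^+ 2).

Definition cost (beta : R) (x x' : 'rV[R]_l) : R := beta * norm2 (x - x').

Definition dotp (u v : 'rV[R]_l) : R := \sum_(k < l) u ord0 k * v ord0 k.

(* w j i is the weight \tilde w_{ji} of user j in user i's embedding. *)
Definition embed (w : 'I_n -> 'I_n -> R) (i : 'I_n) (xi : 'rV[R]_l)
  (X : 'I_n -> 'rV[R]_l) : 'rV[R]_l :=
  w i i *: xi + \sum_(j < n | j != i) w j i *: X j.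

(* h_{theta,b}(x_i; x_{-i}) = +1, with sign(0) = +1. *)
Definition classified_pos (w : 'I_n -> 'I_n -> R) (theta : 'rV[R]_l) (b : R)
  (i : 'I_n) (xi : 'rV[R]_l) (X : 'I_n -> 'rV[R]_l) : Prop :=
  0 <= dotp theta (embed w i xi X) + b.

Definition br_step (w : 'I_n -> 'I_n -> R) (theta : 'rV[R]_l) (b beta : R)
  (Xprev : 'I_n -> 'rV[R]_l) (i : 'I_n) (xnew : 'rV[R]_l) : Prop :=
  let can_move :=
    ~ classified_pos w theta b i (Xprev i) Xprev /\
    exists x', classified_pos w theta b i x' Xprev /\ cost beta (Xprev i) x' <= 2 in
  (can_move ->
     classified_pos w theta b i xnew Xprev /\
     cost beta (Xprev i) xnew <= 2 /\
     forall y, classified_pos w theta b i y Xprev ->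
       cost beta (Xprev i) xnew <= cost beta (Xprev i) y) /\
  (~ can_move -> xnew = Xprev i).

Definition trajectory (w : 'I_n -> 'I_n -> R) (theta : 'rV[R]_l) (b beta : R)
  (x : 'I_n -> 'rV[R]_l) (X : nat -> 'I_n -> 'rV[R]_l) : Prop :=
  X 0%N = x /\ forall t i, br_step w theta b beta (X t) i (X t.+1 i).

Definition moves_at (X : nat -> 'I_n -> 'rV[R]_l) (i : 'I_n) (t : nat) : Prop :=
  (0 < t)%N /\ X t i <> X t.-1 i.

End Strategic.

From mathcomp Require Import all_boot all_order all_algebra.
From mathcomp Require Import reals.
From mathcomp Require Import zify lra.
From Stdlib Require Import FunctionalExtensionality.
Set Implicit Arguments. Unset Strict Implicit. Unset Printing Implicit Defensive.
Import Order.TTheory GRing.Theory Num.Theory.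
Local Open Scope ring_scope.

(* Put the users on a path: user i's embedding is x_i + x_(i-1) (just x_0
   for the first user), theta = 1, b = 0, beta = 1, and everybody starts at
   -3/2.  A user whose predecessor also sits at -3/2 has score -3, and
   reaching the half-line {score >= 0} would cost 3 > 2, so she stays; once
   her predecessor has moved to 0 the cost is only 3/2 and she moves to 0.
   Hence exactly user i moves at round i + 1, and the upper half of the users
   all move after round n/2. *)

Lemma card_ord_ge n m : #|[set i : 'I_n | (m <= i)%N]| = (n - m)%N.
Proof.
rewrite -sum1_card -[RHS]muln1 -sum_nat_const_nat big_geq_mkord.
by apply: eq_bigl => i; rewrite inE.
Qed.

Lemma half_natr_le (R : realFieldType) m k :
  (m <= 2 * k)%N -> 1 / 2 * m%:R <= k%:R :> R.
Proof. by rewrite -(ler_nat R) natrM => ?; lra. Qed.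

Section OneDimensional.
Variable R : realType.

Lemma rV1_const (v : 'rV[R]_1) : v = const_mx (v ord0 ord0).
Proof. by apply/rowP => k; rewrite (ord1 k) mxE. Qed.

Lemma cost_rV1 beta (u v : 'rV[R]_1) :
  cost beta u v = beta * `|u ord0 ord0 - v ord0 ord0|.
Proof. by rewrite /cost /norm2 big_ord1 sqrtr_sqr !mxE. Qed.

Lemma dotp1_embed n (w : 'I_n -> 'I_n -> R) i y (P : 'I_n -> 'rV[R]_1) :
  dotp (const_mx 1) (embed w i y P) =
  w i i * y ord0 ord0 + \sum_(j < n | j != i) w j i * P j ord0 ord0.
Proof.
rewrite /dotp big_ord1 !mxE mul1r summxE; congr (_ + _).
by apply: eq_bigr => j _; rewrite !mxE.
Qed.

Definition threshold_best_response (beta s x : R) : R :=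
  if (x < s) && (beta * (s - x) <= 2) then s else x.

Lemma br_step_threshold n (w : 'I_n -> 'I_n -> R) (theta : 'rV[R]_1)
    (b beta s : R) (P : 'I_n -> 'rV[R]_1) (i : 'I_n) :
  0 < beta ->
  (forall y, classified_pos w theta b i y P <-> s <= y ord0 ord0) ->
  forall y, br_step w theta b beta P i y <->
            y = const_mx (threshold_best_response beta s (P i ord0 ord0)).
Proof.
move=> beta_gt0 posE y; set x := P i ord0 ord0.
have cost_ge (z : 'rV[R]_1) :
    x <= s -> s <= z ord0 ord0 -> beta * (s - x) <= cost beta (P i) z.
  move=> xs sz; rewrite cost_rV1 -/x ler_pM2l // distrC.
  by have := ler_norm (z ord0 ord0 - x); lra.
have cost_s : x <= s -> cost beta (P i) (const_mx s) = beta * (s - x).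
  by move=> xs; rewrite cost_rV1 mxE distrC ger0_norm // subr_ge0.
have can_moveE : (~ classified_pos w theta b i (P i) P /\
      exists x', classified_pos w theta b i x' P /\ cost beta (P i) x' <= 2)
    <-> (x < s) && (beta * (s - x) <= 2).
  split.
    move=> [/posE/negP xs [x' [/posE sx' cx']]]; rewrite -ltNge in xs.
    by rewrite xs (le_trans (cost_ge _ (ltW xs) sx')).
  move=> /andP[xs cs]; split; first by rewrite posE; apply/negP; rewrite -ltNge.
  by exists (const_mx s); rewrite posE (cost_s (ltW xs)) mxE.
rewrite /br_step /threshold_best_response can_moveE; case: ifP => /= [/andP[xs cs]|_].
  split=> [[/(_ isT) [/posE sy [_ ymin]] _] | ->].
    have := ymin (const_mx s); rewrite posE mxE (cost_s (ltW xs)) => /(_ (lexx s)).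
    rewrite cost_rV1 -/x ler_pM2l // distrC => /(le_trans (ler_norm _)) ys.
    by rewrite [y]rV1_const; congr const_mx; apply: le_anti; rewrite sy andbT; lra.
  split=> // _; rewrite posE mxE (cost_s (ltW xs)); do ![split=> //].
  by move=> z /posE /(cost_ge _ (ltW xs)).
split=> [[_ yE] | ->]; first by rewrite yE //; apply: rV1_const.
by split=> // _; apply/esym/rV1_const.
Qed.

End OneDimensional.

Section Cascade.
Variables (R : realType) (n : nat).

Definition chain_weight (j i : 'I_n) : R := ((j == i) || (j.+1 == i))%:R.

Definition cascade_value (t j : nat) : R := if (j < t)%N then 0 else - (3 / 2).

Definition cascade (t : nat) (i : 'I_n) : 'rV[R]_1 := const_mx (cascade_value t i).

Lemma chain_weight_ge0 i j : 0 <= chain_weight j i.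
Proof. exact: ler0n. Qed.

Lemma chain_neighbour_sum (f : nat -> R) (i : 'I_n) :
  \sum_(j < n | j != i) chain_weight j i * f j = if val i is k.+1 then f k else 0.
Proof.
have -> : \sum_(j < n | j != i) chain_weight j i * f j =
          \sum_(j < n) (j.+1 == i)%:R * f j.
  rewrite [RHS](bigD1 i) //= eqn_leq ltnn mul0r add0r.
  by apply: eq_bigr => j ji; rewrite /chain_weight (negbTE ji).
case: i => [[|k] ltkn] /=; first by rewrite big1 // => j _; rewrite mul0r.
rewrite (bigD1 (Ordinal (ltnW ltkn))) //= eqxx mul1r big1 ?addr0 // => j jk.
by rewrite eqSS (_ : (j == k :> nat) = false) ?mul0r //; apply/negbTE.
Qed.

Definition cascade_threshold (t : nat) (i : 'I_n) : R :=
  - (if val i is k.+1 then cascade_value t k else 0).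

Lemma classified_cascade t i y :
  classified_pos chain_weight (const_mx 1) 0 i y (cascade t) <->
  cascade_threshold t i <= y ord0 ord0.
Proof.
rewrite /classified_pos dotp1_embed addr0 /chain_weight eqxx mul1r.
under eq_bigr do rewrite mxE.
by rewrite chain_neighbour_sum -[cascade_threshold t i <= _]subr_ge0 opprK.
Qed.

Lemma cascade_thresholdE t (i : 'I_n) :
  cascade_threshold t i = if (i <= t)%N then 0 else 3 / 2.
Proof.
rewrite /cascade_threshold; case: i => [[|k] _] /=; first by rewrite oppr0.
by rewrite /cascade_value; case: ifP; rewrite ?oppr0 ?opprK.
Qed.

Lemma cascade_response t (i : 'I_n) :
  threshold_best_response 1 (cascade_threshold t i) (cascade_value t i) =
  cascade_value t.+1 i.
Proof.
rewrite /threshold_best_response cascade_thresholdE /cascade_value mul1r ltnS.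
case: ltngtP => _ /=; first by case: ifP.
  by case: ifP => // /andP[_]; lra.
by rewrite ifT //; apply/andP; split; lra.
Qed.

Lemma br_step_cascade t i y :
  br_step chain_weight (const_mx 1) 0 1 (cascade t) i y <-> y = cascade t.+1 i.
Proof.
by rewrite (br_step_threshold ltr01 (classified_cascade t i)) mxE cascade_response.
Qed.

Lemma cascade_trajectory :
  trajectory chain_weight (const_mx 1) 0 1 (cascade 0) cascade.
Proof. by split=> // t i; apply/br_step_cascade. Qed.

Lemma trajectory_cascadeE X :
  trajectory chain_weight (const_mx 1) 0 1 (cascade 0) X -> X = cascade.
Proof.
move=> [X0 Xstep]; apply: functional_extensionality; elim=> // t IHt.
by apply: functional_extensionality => i; apply/br_step_cascade; rewrite -IHt.
Qed.

Lemma cascade_moves_at (i : 'I_n) : moves_at cascade i i.+1.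
Proof.
split=> //=; rewrite /cascade /cascade_value ltnSn ltnn.
by move=> /rowP /(_ ord0); rewrite !mxE; lra.
Qed.

End Cascade.

Theorem corollary3 (R : realType) :
  exists (c1 c2 : R), 0 < c1 /\ 0 < c2 /\
  exists N : nat, forall n : nat, (N <= n)%N ->
  exists (l : nat) (w : 'I_n -> 'I_n -> R) (x : 'I_n -> 'rV[R]_l)
         (theta : 'rV[R]_l) (b beta : R),
    (forall i j, 0 <= w j i) /\ 0 < beta /\
    (exists X, trajectory w theta b beta x X) /\
    (forall X, trajectory w theta b beta x X ->
       exists S : {set 'I_n},
         c1 * n%:R <= (#|S|)%:R /\
         forall i, i \in S ->
           exists t : nat, c2 * n%:R <= t%:R /\ moves_at X i t).
Proof.
exists (1 / 2), (1 / 2); split; first lra; split; first lra.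
exists 0%N => n _.
exists 1%N, (@chain_weight R n), (@cascade R n 0), (const_mx 1), 0, 1.
split; first exact: chain_weight_ge0.
split; first exact: ltr01.
split; first by exists (@cascade R n); apply: cascade_trajectory.
move=> X /trajectory_cascadeE ->.
exists [set i : 'I_n | (n./2 <= i)%N]; split.
  by rewrite card_ord_ge; apply: half_natr_le; lia.
move=> i; rewrite inE => half_le_i; exists i.+1.
by split; [apply: half_natr_le; lia | apply: cascade_moves_at].
Qed.
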